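(* Let $n\ge1$ and let $a_1,\dots,a_n$ be real numbers with $\sum_{j=1}^n a_j=1$. Put $C(t)=\sum_{j=1}^n a_j\cos jt$ and $S(t)=\sum_{j=1}^n a_j\sin jt$. Then $$\rho=\min_{t\in\mathbb R}\{C(t):\ S(t)=0\}$$ is negative. *)

From Stdlib Require Import Reals.
Open Scope R_scope.

Fixpoint sum1n (n : nat) (f : nat -> R) : R :=
  match n with
  | O => 0
  | S m => sum1n m f + f (S m)
  end.

Definition Cfun (n : nat) (a : nat -> R) (t : R) : R :=
  sum1n n (fun j => a j * cos (INR j * t)).
Definition Sfun (n : nat) (a : nat -> R) (t : R) : R :=
  sum1n n (fun j => a j * sin (INR j * t)).

(* Let P(z) = a_1 z + ... + a_n z^n, so that P(e^(it)) = C(t) + i S(t),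
   P(0) = 0 and P(1) = 1.  If P is not constant, then near any z0 we have
   P(z0 + h) = P(z0) + d h^m + O(h^(m+1)) with d <> 0, so the image of a small
   circle around z0 winds around P(z0) and meets the horizontal half-line to
   its left: some point near z0 has the same imaginary part as z0 and a smaller
   real part.  Hence the minimum of Re P on the compact set
   { |z| <= 1 : Im P(z) = 0 } is attained on the unit circle, at some e^(it0),
   where it is the minimum rho; and it is negative because, applied at z0 = 0,
   the same argument gives points of that set where Re P < 0. *)

From Stdlib Require Import Reals Lra Psatz Classical.
From Stdlib Require List.
From Coquelicot Require Import Coquelicot.
Open Scope R_scope.

Definition ei (t : R) : C := (cos t, sin t).

Lemma ei_add (s t : R) : ei (s + t) = (ei s * ei t)%C.
Proof. unfold ei, Cmult; simpl; rewrite cos_plus, sin_plus; f_equal; ring. Qed.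

Lemma ei_add_PI (t : R) : ei (t + PI) = (- ei t)%C.
Proof. unfold ei, Copp; simpl; now rewrite neg_cos, neg_sin. Qed.

Lemma ei_pow (t : R) (n : nat) : (ei t ^ n)%C = ei (INR n * t).
Proof.
induction n as [|n IH].
- unfold ei; simpl; now rewrite Rmult_0_l, cos_0, sin_0.
- rewrite Cpow_S, IH, <- ei_add, S_INR; f_equal; ring.
Qed.

Lemma Cmod_ei (t : R) : Cmod (ei t) = 1.
Proof.
unfold Cmod, ei; cbn [fst snd].
replace (cos t ^ 2 + sin t ^ 2) with 1; [apply sqrt_1|].
rewrite <- (sin2_cos2 t); unfold Rsqr; ring.
Qed.

Lemma ei_surj (z : C) : Cmod z = 1 -> exists t, ei t = z.
Proof.
destruct z as [x y]; unfold Cmod; cbn [fst snd]; intros Hz.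
assert (Hxy : y * y = 1 - x²).
{ apply sqrt_lem_0 in Hz; [unfold Rsqr; lra | nra | lra]. }
assert (Hx : -1 <= x <= 1) by (unfold Rsqr in Hxy; nra).
destruct (Rle_or_lt 0 y) as [Hy | Hy].
- exists (acos x); unfold ei.
  rewrite cos_acos, sin_acos, <- Hxy, sqrt_square; auto.
- exists (- acos x); unfold ei.
  rewrite cos_neg, sin_neg, cos_acos, sin_acos, <- Hxy by auto.
  replace (y * y) with (- y * - y) by ring.
  rewrite sqrt_square by lra; f_equal; ring.
Qed.

Lemma polar_form (d : C) : d <> 0%C -> exists phi, d = (Cmod d * ei phi)%C.
Proof.
intros Hd.
assert (Hm : 0 < Cmod d) by now apply Cmod_gt_0.
assert (Hm' : RtoC (Cmod d) <> 0%C) by (intros E; injection E; lra).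
destruct (ei_surj (d / Cmod d)) as [phi Hphi].
{ rewrite Cmod_div, Cmod_R, Rabs_pos_eq by (auto; lra); field; lra. }
exists phi; rewrite Hphi; field; exact Hm'.
Qed.

Fixpoint Chorner (l : list C) (z : C) : C :=
  match l with
  | nil => 0%C
  | cons c l' => (c + z * Chorner l' z)%C
  end.

Definition is_Cpoly (f : C -> C) : Prop := exists l, forall z, f z = Chorner l z.

Lemma is_Cpoly_const (c : C) : is_Cpoly (fun _ => c).
Proof. exists (cons c nil); intros z; simpl; ring. Qed.

Lemma is_Cpoly_mulX (f : C -> C) : is_Cpoly f -> is_Cpoly (fun z => z * f z)%C.
Proof. intros [l Hl]; exists (cons (RtoC 0) l); intros z; simpl; rewrite Hl; ring. Qed.

Lemma Chorner_add (l1 l2 : list C) :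
  exists l, forall z, Chorner l z = (Chorner l1 z + Chorner l2 z)%C.
Proof.
revert l2; induction l1 as [|c1 l1 IH]; intros [|c2 l2].
- exists nil; intros; simpl; ring.
- exists (cons c2 l2); intros; simpl; ring.
- exists (cons c1 l1); intros; simpl; ring.
- destruct (IH l2) as [l Hl]; exists (cons (c1 + c2)%C l); intros z; simpl; rewrite Hl; ring.
Qed.

Lemma is_Cpoly_add (f g : C -> C) :
  is_Cpoly f -> is_Cpoly g -> is_Cpoly (fun z => f z + g z)%C.
Proof.
intros [l1 H1] [l2 H2]; destruct (Chorner_add l1 l2) as [l Hl].
exists l; intros z; now rewrite Hl, H1, H2.
Qed.

Lemma is_Cpoly_scale (c : C) (f : C -> C) : is_Cpoly f -> is_Cpoly (fun z => c * f z)%C.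
Proof.
intros [l Hl]; exists (List.map (Cmult c) l); intros z; rewrite Hl; clear f Hl.
induction l as [|a l IH]; simpl; [ring | rewrite <- IH; ring].
Qed.

Lemma is_Cpoly_pow (n : nat) : is_Cpoly (fun z => z ^ n)%C.
Proof.
induction n as [|n IH]; [apply (is_Cpoly_const 1%C)|].
apply is_Cpoly_mulX in IH; destruct IH as [l Hl].
exists l; intros z; now rewrite Cpow_S.
Qed.

Lemma is_Cpoly_translate (f : C -> C) (z0 : C) :
  is_Cpoly f -> is_Cpoly (fun h => f (z0 + h)%C).
Proof.
intros [l Hl].
enough (H : is_Cpoly (fun h => Chorner l (z0 + h)%C)).
{ destruct H as [l' Hl']; exists l'; intros h; now rewrite Hl, Hl'. }
clear f Hl; induction l as [|c l IH]; [apply (is_Cpoly_const 0%C)|].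
destruct (is_Cpoly_add _ _ (is_Cpoly_const c)
            (is_Cpoly_add _ _ (is_Cpoly_scale z0 _ IH) (is_Cpoly_mulX _ IH)))
  as [l' Hl'].
exists l'; intros h; rewrite <- Hl'; simpl; ring.
Qed.

Lemma is_Cpoly_bounded (f : C -> C) : is_Cpoly f ->
  exists B, 0 <= B /\ forall h, Cmod h <= 1 -> Cmod (f h) <= B.
Proof.
intros [l Hl]; setoid_rewrite Hl; clear f Hl.
induction l as [|c l (B & HB & IH)].
- exists 0; split; [lra|]; intros h _; simpl; rewrite Cmod_0; lra.
- exists (Cmod c + B); split; [pose proof (Cmod_ge_0 c); lra|]; intros h Hh; simpl.
  eapply Rle_trans; [apply Cmod_triangle|]; rewrite Cmod_mult.
  pose proof (IH h Hh); pose proof (Cmod_ge_0 h); pose proof (Cmod_ge_0 (Chorner l h)).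
  nra.
Qed.

Lemma Chorner_lowest_term (l : list C) :
  (forall h, Chorner l h = 0%C) \/
  exists (k : nat) (d : C) (q : C -> C), d <> 0%C /\ is_Cpoly q /\
    forall h, Chorner l h = (h ^ k * (d + h * q h))%C.
Proof.
induction l as [|c l IH]; [now left|].
destruct (classic (c = 0%C)) as [-> | Hc].
- destruct IH as [IH | (k & d & q & Hd & Hq & IH)].
  + left; intros h; simpl; rewrite IH; ring.
  + right; exists (S k), d, q; split; [|split]; auto.
    intros h; simpl; rewrite IH; ring.
- right; exists O, c, (Chorner l); split; [|split]; auto.
  + now exists l.
  + intros h; simpl; ring.
Qed.

Lemma is_Cpoly_expansion (f : C -> C) (z0 : C) :
  is_Cpoly f -> (exists w, f w <> f z0) ->
  exists (k : nat) (d : C) (q : C -> C), d <> 0%C /\ is_Cpoly q /\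
    forall h, f (z0 + h)%C = (f z0 + h ^ S k * (d + h * q h))%C.
Proof.
intros Hf [w Hw].
destruct (is_Cpoly_translate f z0 Hf) as [l Hl].
assert (Hw' : Chorner l (w - z0)%C <> Chorner l 0%C).
{ rewrite <- !Hl; now replace (z0 + (w - z0))%C with w by ring; rewrite Cplus_0_r. }
destruct l as [|c l]; [easy|].
assert (Hc : f z0 = c) by (rewrite <- (Cplus_0_r z0), Hl; simpl; ring).
destruct (Chorner_lowest_term l) as [Hz | (k & d & q & Hd & Hq & Hk)].
- exfalso; apply Hw'; simpl; rewrite !Hz; ring.
- exists k, d, q; split; [|split]; auto.
  intros h; rewrite Hl, Hc; simpl; rewrite Hk; ring.
Qed.

Lemma Cmod_le_1 (z : C) : Cmod z <= 1 <-> fst z * fst z + snd z * snd z <= 1.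
Proof.
unfold Cmod.
replace (fst z ^ 2 + snd z ^ 2) with (fst z * fst z + snd z * snd z) by ring.
assert (0 <= fst z * fst z + snd z * snd z) by nra.
split; intros Hz.
- apply sqrt_le_0; [lra | lra | now rewrite sqrt_1].
- rewrite <- sqrt_1; now apply sqrt_le_1_alt.
Qed.

Lemma unit_disk_box (x y : R) : x * x + y * y <= 1 -> -1 <= x <= 1 /\ -1 <= y <= 1.
Proof. intros; split; split; nra. Qed.

Module UnitDiskCompactness.
From mathcomp Require Import all_boot all_order all_algebra.
From mathcomp Require Import all_classical all_reals.
From mathcomp Require Import topology normedtype derive.
From mathcomp Require Import Rstruct Rstruct_topology.
Local Open Scope ring_scope.
Local Open Scope classical_set_scope.

Lemma Chorner_continuous (l : list C) :
  continuous (fun z : R * R => fst (Chorner l z)) /\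
  continuous (fun z : R * R => snd (Chorner l z)).
Proof.
elim: l => [|c l [IH1 IH2]] /=; first by split; exact: cst_continuous.
split=> z.
- rewrite /Rminus; apply: (@continuousD _ R^o _ (fun=> c.1)); first exact: cst_continuous.
  apply: (@continuousD _ R^o); last apply: (@continuousN _ R^o).
  + by apply: continuousM; [exact: cvg_fst | exact: IH1].
  + by apply: continuousM; [exact: cvg_snd | exact: IH2].
- apply: (@continuousD _ R^o _ (fun=> c.2)); first exact: cst_continuous.
  apply: (@continuousD _ R^o).
  + by apply: continuousM; [exact: cvg_fst | exact: IH2].
  + by apply: continuousM; [exact: cvg_snd | exact: IH1].
Qed.

Lemma is_Cpoly_path_continuity (f : C -> C) (g : R -> C) : is_Cpoly f ->
  continuity (fun t => fst (g t)) -> continuity (fun t => snd (g t)) ->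
  continuity (fun t => snd (f (g t))).
Proof.
move=> [l Hl] c1 c2 t.
have -> : f = Chorner l by apply: funext.
have -> : g = (fun s => ((g s).1, (g s).2)) by apply: funext => s; case: (g s).
have cg : {for t, continuous (fun s => ((g s).1, (g s).2))}.
  move: (c1 t) (c2 t) => /continuity_ptE c1t /continuity_ptE c2t.
  exact: (cvg_pair c1t c2t).
exact/continuity_ptE/(continuous_comp cg ((Chorner_continuous l).2 _)).
Qed.

Lemma closed_unit_disk : closed [set z : R * R | Rle (Cmod z) 1].
Proof.
have -> : [set z : R * R | Rle (Cmod z) 1] =
    (fun z : R * R => Rplus (Rmult z.1 z.1) (Rmult z.2 z.2)) @^-1` [set r | r <= 1].
  by apply/seteqP; split => z /=; rewrite Cmod_le_1 => /RleP.
apply: preimage_closed; last exact: closed_le.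
move=> z _; apply: (@continuousD _ R^o);
  by apply: continuousM; (exact: cvg_fst || exact: cvg_snd).
Qed.

Lemma compact_unit_disk : compact [set z : R * R | Rle (Cmod z) 1].
Proof.
apply: (@subclosed_compact _ [set z : R * R | Rle (Cmod z) 1] (`[-1, 1] `*` `[-1, 1])).
- exact: closed_unit_disk.
- by apply: compact_setX; exact: segment_compact.
- move=> z /= /Cmod_le_1 /unit_disk_box [[h1 h2] [h3 h4]]; rewrite !in_itv /=.
  by split; apply/andP; split; apply/RleP.
Qed.

Lemma is_Cpoly_disk_slice_min (f : C -> C) : is_Cpoly f ->
  (exists z, Rle (Cmod z) 1 /\ snd (f z) = 0) ->
  exists z, (Rle (Cmod z) 1 /\ snd (f z) = 0) /\
    forall w, Rle (Cmod w) 1 -> snd (f w) = 0 -> Rle (fst (f z)) (fst (f w)).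
Proof.
move=> [l Hl] [z0 z0K]; have Ef : f = Chorner l by apply: funext.
pose K := [set z : R * R | Rle (Cmod z) 1] `&` (fun z => snd (f z)) @^-1` [set 0].
have cK : compact K.
  apply: (@subclosed_compact _ K [set z : R * R | Rle (Cmod z) 1]).
  - apply: closedI; first exact: closed_unit_disk.
    apply: preimage_closed; last exact: closed_eq.
    by move=> z _; rewrite Ef; exact: (Chorner_continuous l).2.
  - exact: compact_unit_disk.
  - by move=> z [].
have cf : continuous (fun z : R * R => fst (f z)) by rewrite Ef; exact: (Chorner_continuous l).1.
have [z zK zmin] := compact_EVT_min (ex_intro _ z0 z0K) cK (continuous_subspaceT cf).
rewrite inE in zK; exists z; split => // w w1 gw.
by apply/RleP; apply: zmin; rewrite inE.
Qed.
End UnitDiskCompactness.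

Lemma cos_ge_cos_PI4 (b : R) : -(PI / 4) <= b <= PI / 4 -> 1 / sqrt 2 <= cos b.
Proof.
intros Hb; rewrite <- cos_PI4; pose proof PI_RGT_0.
destruct (Rle_or_lt 0 b).
- apply cos_decr_1; lra.
- rewrite <- (cos_neg b); apply cos_decr_1; lra.
Qed.

Lemma crosses_negative_real_axis (F : R -> C) (r : R) : 0 < r ->
  continuity (fun b => snd (F b)) ->
  (forall b, -(PI / 4) <= b <= PI / 4 -> Cmod (F b + r * ei b)%C <= r / 4) ->
  exists b, snd (F b) = 0 /\ fst (F b) < 0.
Proof.
intros Hr HF Hclose.
assert (Hsqrt2 : 1 / 4 < 1 / sqrt 2).
{ pose proof (sqrt_lt_R0 2 ltac:(lra)); pose proof (sqrt_sqrt 2 ltac:(lra)).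
  unfold Rdiv; rewrite !Rmult_1_l; apply Rinv_lt_contravar; nra. }
assert (Hcomp : forall b, -(PI / 4) <= b <= PI / 4 ->
  Rabs (fst (F b) + r * cos b) <= r / 4 /\ Rabs (snd (F b) + r * sin b) <= r / 4).
{ intros b Hb; specialize (Hclose b Hb).
  pose proof (Rmax_Cmod (F b + r * ei b)%C) as Hmax.
  pose proof (Rmax_l (Rabs (fst (F b + r * ei b)%C)) (Rabs (snd (F b + r * ei b)%C))).
  pose proof (Rmax_r (Rabs (fst (F b + r * ei b)%C)) (Rabs (snd (F b + r * ei b)%C))).
  replace (fst (F b + r * ei b)%C) with (fst (F b) + r * cos b) in * by (simpl; ring).
  replace (snd (F b + r * ei b)%C) with (snd (F b) + r * sin b) in * by (simpl; ring).
  split; lra. }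
pose proof PI_RGT_0.
destruct (Hcomp (-(PI / 4)) ltac:(lra)) as [_ Hleft].
destruct (Hcomp (PI / 4) ltac:(lra)) as [_ Hright].
rewrite sin_neg, sin_PI4 in Hleft; rewrite sin_PI4 in Hright.
apply Rabs_le_between in Hleft, Hright.
assert (Hsign : snd (F (-(PI / 4))) * snd (F (PI / 4)) <= 0).
{ apply Rmult_le_0_l; nra. }
destruct (IVT_cor _ (-(PI / 4)) (PI / 4) HF ltac:(lra) Hsign) as (b & Hb & Hsnd).
exists b; split; [exact Hsnd|].
destruct (Hcomp b Hb) as [Hfst _]; apply Rabs_le_between in Hfst.
pose proof (cos_ge_cos_PI4 b Hb); nra.
Qed.

Lemma small_radius (r B c : R) : 0 < r -> 0 <= B -> 0 < c ->
  exists delta, 0 < delta /\ delta < r /\ delta <= 1 /\ delta * B <= c.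
Proof.
intros Hr HB Hc.
set (m := c / (B + 1)).
assert (Hm : 0 < m /\ m * B <= c).
{ unfold m; split; [apply Rdiv_lt_0_compat; lra|].
  apply Rmult_le_reg_r with (B + 1); [lra|]; field_simplify; nra. }
exists (Rmin (r / 2) (Rmin 1 m)).
pose proof (Rmin_l (r / 2) (Rmin 1 m)); pose proof (Rmin_r (r / 2) (Rmin 1 m)).
pose proof (Rmin_l 1 m); pose proof (Rmin_r 1 m).
assert (0 < Rmin (r / 2) (Rmin 1 m)) by (repeat apply Rmin_glb_lt; lra).
repeat split; nra.
Qed.

Lemma rotate_to_negative_axis (delta phi b : R) (k : nat) :
  ((delta * ei ((PI + b - phi) / INR (S k))) ^ S k * ei phi)%C
  = (- RtoC (delta ^ S k) * ei b)%C.
Proof.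
rewrite Cpow_mult_l, ei_pow, <- RtoC_pow, <- Cmult_assoc, <- ei_add.
replace (INR (S k) * ((PI + b - phi) / INR (S k)) + phi) with (b + PI)
  by (field; apply not_0_INR; discriminate).
rewrite ei_add_PI; ring.
Qed.

Lemma is_Cpoly_descent (f : C -> C) (z0 : C) (r : R) :
  is_Cpoly f -> (exists w, f w <> f z0) -> 0 < r ->
  exists h, Cmod h < r /\ snd (f (z0 + h)%C) = snd (f z0) /\ fst (f (z0 + h)%C) < fst (f z0).
Proof.
intros Hf Hnc Hr.
destruct (is_Cpoly_expansion f z0 Hf Hnc) as (k & d & q & Hd & Hq & Hexp).
destruct (is_Cpoly_bounded q Hq) as (B & HB & Hbound).
destruct (polar_form d Hd) as [phi Hphi].
assert (Hrho : 0 < Cmod d) by now apply Cmod_gt_0.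
set (rho := Cmod d) in *.
destruct (small_radius r B (rho / 4) Hr HB ltac:(lra))
  as (delta & Hdelta0 & Hdelta_r & Hdelta1 & HdeltaB).
(* On the circle of radius delta around z0 parametrised by p, the leading term
   (p b)^(k+1) d of f (z0 + p b) - f z0 is - delta^(k+1) |d| e^(ib). *)
set (p := fun b => (delta * ei ((PI + b - phi) / INR (S k)))%C).
assert (Hp : forall b, Cmod (p b) = delta).
{ intros b; unfold p; rewrite Cmod_mult, Cmod_R, Cmod_ei, Rabs_pos_eq; lra. }
assert (Hpow : 0 < delta ^ S k) by (apply pow_lt; lra).
destruct (crosses_negative_real_axis (fun b => f (z0 + p b) - f z0)%C (delta ^ S k * rho))
  as (b & Him & Hre).
- now apply Rmult_lt_0_compat.
- apply (continuity_minus (fun b => snd (f (z0 + p b)%C)) (fun _ => snd (f z0))).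
  + apply UnitDiskCompactness.is_Cpoly_path_continuity; auto; unfold p, ei; simpl; reg.
  + apply continuity_const; now intros x y.
- intros b' _.
  assert (Hrot : (RtoC (delta ^ S k * rho) * ei b')%C = (- (p b' ^ S k * d))%C).
  { rewrite Hphi; unfold p.
    rewrite (Cmult_comm rho), Cmult_assoc, rotate_to_negative_axis, RtoC_mult; ring. }
  replace (f (z0 + p b') - f z0 + RtoC (delta ^ S k * rho) * ei b')%C
    with (p b' ^ S k * (p b' * q (p b')))%C
    by (rewrite Hexp, Hrot; ring).
  rewrite !Cmod_mult, Cmod_pow, Hp.
  pose proof (Hbound (p b') ltac:(rewrite Hp; lra)).
  pose proof (Cmod_ge_0 (q (p b'))).
  assert (delta * Cmod (q (p b')) <= rho / 4) by nra.
  nra.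
- exists (p b); split; [rewrite Hp; lra|].
  simpl in Him, Hre; split; lra.
Qed.

Lemma is_Cpoly_slice_min_on_circle (f : C -> C) : is_Cpoly f ->
  (forall z0, exists w, f w <> f z0) ->
  (exists z, Cmod z <= 1 /\ snd (f z) = 0) ->
  exists z, Cmod z = 1 /\ snd (f z) = 0 /\
    forall w, Cmod w <= 1 -> snd (f w) = 0 -> fst (f z) <= fst (f w).
Proof.
intros Hf Hnc Hne.
destruct (UnitDiskCompactness.is_Cpoly_disk_slice_min f Hf Hne) as (z & [Hz Him] & Hmin).
exists z; split; [|split; auto].
destruct Hz as [Hlt | Heq]; [exfalso | exact Heq].
destruct (is_Cpoly_descent f z (1 - Cmod z) Hf (Hnc z) ltac:(lra)) as (h & Hh & Himh & Hreh).
pose proof (Cmod_triangle z h).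
pose proof (Hmin (z + h)%C ltac:(lra) ltac:(congruence)); lra.
Qed.

Fixpoint poly1n (n : nat) (a : nat -> R) (z : C) : C :=
  match n with
  | O => 0%C
  | S m => (poly1n m a z + a (S m) * z ^ S m)%C
  end.

Lemma is_Cpoly_poly1n (n : nat) (a : nat -> R) : is_Cpoly (poly1n n a).
Proof.
induction n as [|n IH]; [apply (is_Cpoly_const 0%C)|].
exact (is_Cpoly_add _ _ IH (is_Cpoly_scale _ _ (is_Cpoly_pow (S n)))).
Qed.

Lemma poly1n_ei (n : nat) (a : nat -> R) (t : R) :
  poly1n n a (ei t) = (Cfun n a t, Sfun n a t).
Proof.
unfold Cfun, Sfun; induction n as [|n IH]; [reflexivity|].
cbn [poly1n sum1n]; rewrite IH, ei_pow; unfold ei, Cmult, Cplus, RtoC; cbn [fst snd].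
f_equal; ring.
Qed.

Lemma poly1n_0 (n : nat) (a : nat -> R) : poly1n n a 0%C = 0%C.
Proof. induction n as [|n IH]; [reflexivity|]; cbn [poly1n]; rewrite IH, Cpow_S; ring. Qed.

Lemma poly1n_1 (n : nat) (a : nat -> R) : fst (poly1n n a 1%C) = sum1n n a.
Proof.
induction n as [|n IH]; [reflexivity|]; cbn [poly1n sum1n].
rewrite <- IH, Cpow_1_l; simpl; ring.
Qed.

Theorem lemma1 (n : nat) (a : nat -> R) (hn : (1 <= n)%nat)
  (hsum : sum1n n a = 1) :
  exists t0 : R,
    Sfun n a t0 = 0 /\
    (forall t : R, Sfun n a t = 0 -> Cfun n a t0 <= Cfun n a t) /\
    Cfun n a t0 < 0.
Proof.
set (P := poly1n n a).
assert (HP : is_Cpoly P) by apply is_Cpoly_poly1n.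
assert (HP10 : P 1%C <> P 0%C).
{ intros E; apply (f_equal fst) in E.
  unfold P in E; rewrite poly1n_1, poly1n_0, hsum in E; simpl in E; lra. }
assert (Hnc : forall z0, exists w, P w <> P z0).
{ intros z0; destruct (classic (P 1%C = P z0)) as [E | E].
  - exists 0%C; congruence.
  - now exists 1%C. }
destruct (is_Cpoly_descent P 0%C 1 HP (Hnc 0%C) Rlt_0_1) as (h0 & Hh0 & Him0 & Hre0).
rewrite Cplus_0_l in Him0, Hre0; unfold P in Him0, Hre0; rewrite poly1n_0 in Him0, Hre0.
destruct (is_Cpoly_slice_min_on_circle P HP Hnc (ex_intro _ h0 (conj (Rlt_le _ _ Hh0) Him0)))
  as (z & Hz & Himz & Hmin).
destruct (ei_surj z Hz) as [t0 <-].
unfold P in Himz, Hmin; rewrite poly1n_ei in Himz, Hmin; simpl in Himz, Hmin.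
exists t0; split; [exact Himz | split].
- intros t Ht; specialize (Hmin (ei t)); rewrite poly1n_ei in Hmin; simpl in Hmin.
  apply Hmin; [rewrite Cmod_ei; lra | exact Ht].
- pose proof (Hmin h0 (Rlt_le _ _ Hh0) Him0); simpl in Hre0; lra.
Qed.
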